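(* Let $r\ge3$. For any partition $\mathcal{Q}$ of $[r]=\{1,\dots,r\}$ with $|\mathcal{Q}|\ge2$ and any $\psi:2^{[r]}\to\mathbb{R}$ with $\psi(\emptyset)=1$, we have $\mathrm{cum}_{[r]}(\psi^{\mathcal{Q}})=0$.
   Context: $\mathfrak{P}_{[r]}$ is the set of cyclically ordered partitions of $[r]$ (partitions into non-empty blocks together with a cyclic order on the blocks), $|\mathcal{P}|$ the number of blocks. For $\phi:2^{[r]}\to\mathbb{R}$, $\mathrm{cum}_{[r]}(\phi)=\sum_{\mathcal{P}\in\mathfrak{P}_{[r]}}(-1)^{|\mathcal{P}|-1}\prod_{I\in\mathcal{P}}\phi(I)$. For a partition $\mathcal{Q}$ of $[r]$, $\psi^{\mathcal{Q}}(I)=\prod_{J\in\mathcal{Q}}\psi(I\cap J)$. *)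

(* [r] = {1..r} is represented by 'I_r = {0..r-1}. *)
From HB Require Import structures.
From mathcomp Require Import all_boot all_order all_algebra all_fingroup.
Set Implicit Arguments. Unset Strict Implicit. Unset Printing Implicit Defensive.
Import Order.TTheory GRing.Theory Num.Theory.
Local Open Scope ring_scope.

(* A cyclic order on a finite set P of blocks: a successor permutation s
   which is the identity off P and forms a single cycle on P
   (every block of P is reachable from every other by iterating s). *)
Definition cyclic_order_on (T : finType) (P : {set T}) (s : {perm T}) : bool :=
  [forall x, (x \notin P) ==> (s x == x)] &&
  [forall x in P, [forall y in P, fconnect s x y]].

Definition cyc_ord_partition (r : nat)
    (p : {set {set 'I_r}} * {perm {set 'I_r}}) : bool :=
  partition p.1 [set: 'I_r] && cyclic_order_on p.1 p.2.

Definition cum (R : numDomainType) (r : nat) (phi : {set 'I_r} -> R) : R :=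
  \sum_(p : {set {set 'I_r}} * {perm {set 'I_r}} | cyc_ord_partition p)
     (-1) ^+ (#|p.1|.-1) * \prod_(I in p.1) phi I.

Definition psiQ (R : numDomainType) (r : nat) (Q : {set {set 'I_r}})
    (psi : {set 'I_r} -> R) : {set 'I_r} -> R :=
  fun I => \prod_(J in Q) psi (I :&: J).

(* Fix a block J of Q and a point x0 of J.  Cutting the cycle of a
   cyclically ordered partition just before the block of x0 lists its blocks as
   B_0, ..., B_(k-1) with x0 in B_0; we encode it by the "code" c with c x = j
   for x in B_j.  Let j be the first index such that either B_j meets both J and
   its complement, or B_j is inside J and B_(j+1) misses J; it exists because
   x0 is in B_0 and J is not all of [r].  Splitting B_j into B_j :&: J and
   B_j :\: J in the first case, and merging B_j with B_(j+1) in the second, does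
   not change this first index, hence is an involution.  It changes the number
   of blocks by one, while psi^Q(B) = psi^Q(B :&: J) psi^Q(B :\: J) because
   psi(set0) = 1, so the terms of cum cancel in pairs. *)

From mathcomp Require Import all_boot all_order all_algebra all_fingroup.
From mathcomp Require Import zify.
Set Implicit Arguments. Unset Strict Implicit. Unset Printing Implicit Defensive.

Section PartitionBlocks.
Variables (T : finType) (P : {set {set T}}).
Hypothesis partP : partition P [set: T].

Lemma pblock_in x : pblock P x \in P.
Proof. by apply: pblock_mem; rewrite (cover_partition partP) inE. Qed.

Lemma partition_block_nonempty B : B \in P -> exists x, x \in B.
Proof.
move=> PB; apply/set0Pn/eqP => B_eq0.
by case/and3P: partP => _ _; rewrite -B_eq0 PB.
Qed.

Lemma mem_block_pblock x B : B \in P -> (x \in B) = (pblock P x == B).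
Proof.
case/and3P: partP => _ tI _ PB; apply/idP/eqP => [xB|<-]; first exact: def_pblock.
by rewrite mem_pblock (cover_partition partP) inE.
Qed.

Lemma pblock_neqT x : 1 < #|P| -> pblock P x != [set: T].
Proof.
case/card_gt1P => A [B [PA PB neqAB]].
have [A' PA' neqA'] : exists2 A', A' \in P & A' != pblock P x.
  by case: (eqVneq A (pblock P x)) => [eqA|]; [exists B; rewrite // -eqA eq_sym | exists A].
have [y yA'] := partition_block_nonempty PA'.
have /eqP yA'E : pblock P y == A' by rewrite -mem_block_pblock.
apply: contraNneq neqA' => xT.
by rewrite -yA'E -(mem_block_pblock _ (pblock_in x)) xT inE.
Qed.

End PartitionBlocks.

Section Codes.
Variables (r : nat) (x0 : 'I_r).
Implicit Types (c : {ffun 'I_r -> nat}) (B : {set 'I_r}).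

Definition nblocks c := (\max_x c x).+1.
Definition block c j := [set x | c x == j].
Definition is_code c := c x0 = 0 /\ forall j, j < nblocks c -> exists x, c x = j.
Definition code_blocks c := [set block c j | j : 'I_(nblocks c)].
Definition code_succ c B :=
  if [pick j : 'I_(nblocks c) | B == block c j] is Some j
  then block c (j.+1 %% nblocks c) else B.
(* Junk value: the identity permutation when [code_succ c] is not injective. *)
Definition code_cycle c : {perm {set 'I_r}} :=
  insubd (1%g : {perm _}) [ffun B => code_succ c B].
Definition code_partition c := (code_blocks c, code_cycle c).

Lemma code_lt_nblocks c x : c x < nblocks c.
Proof. by rewrite ltnS; apply: leq_bigmax. Qed.

Lemma is_code_nblocks c n : c x0 = 0 -> (forall x, c x < n) ->
  (forall j, j < n -> exists x, c x = j) -> is_code c /\ nblocks c = n.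
Proof.
move=> c0 c_lt c_onto; suff nbn : nblocks c = n by rewrite /is_code nbn.
have n_gt0 : 0 < n by rewrite -c0 c_lt.
have [y cy] : exists y, c y = n.-1 by apply: c_onto; rewrite ltn_predL.
apply/eqP; rewrite -(prednK n_gt0) eqSS eqn_leq -{2}cy leq_bigmax andbT.
by apply/bigmax_leqP => x _; rewrite -ltnS (prednK n_gt0).
Qed.

Lemma mem_code_blocks c B :
  (B \in code_blocks c) = [exists j : 'I_(nblocks c), B == block c j].
Proof. by apply/imsetP/existsP => [[j _ ->]|[j /eqP ->]]; exists j. Qed.

Lemma block_in_code_blocks c j : j < nblocks c -> block c j \in code_blocks c.
Proof. by move=> j_lt; apply/imsetP; exists (Ordinal j_lt). Qed.

Lemma code_blocksP c B : B \in code_blocks c -> exists2 j, j < nblocks c & B = block c j.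
Proof. by move=> /imsetP[j _ ->]; exists j. Qed.

Lemma code_succ_id c B : B \notin code_blocks c -> code_succ c B = B.
Proof.
rewrite mem_code_blocks negb_exists /code_succ => /forallP nB.
by case: pickP => // j Bj; have := nB j; rewrite Bj.
Qed.

Variable c : {ffun 'I_r -> nat}.
Hypothesis code_c : is_code c.

Lemma block_nonempty j : j < nblocks c -> exists x, x \in block c j.
Proof. by case: code_c => _ /[apply] -[x cx]; exists x; rewrite inE cx. Qed.

Lemma block_inj i j : i < nblocks c -> block c i = block c j -> i = j.
Proof.
move=> /block_nonempty[x]; rewrite inE => /eqP <- eij.
have : x \in block c (c x) by rewrite inE.
by rewrite eij inE => /eqP.
Qed.

Lemma card_code_blocks : #|code_blocks c| = nblocks c.
Proof.
rewrite card_in_imset ?card_ord // => i j _ _.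
by move/(block_inj (ltn_ord i))/val_inj.
Qed.

Lemma code_blocks_partition : partition (code_blocks c) [set: 'I_r].
Proof.
apply/and3P; split.
- apply/eqP/setP => x; rewrite inE; apply/bigcupP; exists (block c (c x)).
    exact/block_in_code_blocks/code_lt_nblocks.
  by rewrite inE.
- apply/trivIsetP => _ _ /code_blocksP[i _ ->] /code_blocksP[j _ ->] neq_ij.
  apply/pred0P => x /=; rewrite !inE; apply/negbTE/andP => -[/eqP-> /eqP eij].
  by rewrite eij eqxx in neq_ij.
- by apply/negP => /code_blocksP[j /block_nonempty[x xj] e]; rewrite -e inE in xj.
Qed.

Lemma pblock_code_blocks x : pblock (code_blocks c) x = block c (c x).
Proof.
case/and3P: code_blocks_partition => _ tI _.
by apply: def_pblock; rewrite ?inE ?block_in_code_blocks ?code_lt_nblocks.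
Qed.

Lemma code_succ_block j : j < nblocks c ->
  code_succ c (block c j) = block c (j.+1 %% nblocks c).
Proof.
move=> j_lt; rewrite /code_succ; case: pickP => [i /eqP/esym/block_inj->//|].
by move/(_ (Ordinal j_lt)); rewrite eqxx.
Qed.

Lemma code_succ_inj : injective (code_succ c).
Proof.
have blockS_in j : block c (j.+1 %% nblocks c) \in code_blocks c.
  by apply: block_in_code_blocks; rewrite ltn_mod.
move=> B B'; case: (boolP (B \in code_blocks c)) => [/code_blocksP[i i_lt ->]|nB];
  case: (boolP (B' \in code_blocks c)) => [/code_blocksP[j j_lt ->]|nB'];
  rewrite ?code_succ_block ?code_succ_id //.
- move=> e; have /eqP : i.+1 %% nblocks c = j.+1 %% nblocks c.
    by apply: block_inj e; rewrite ltn_mod.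
  by rewrite -[i.+1]addn1 -[j.+1]addn1 eqn_modDr !modn_small // => /eqP->.
- by move=> e; rewrite -e blockS_in in nB'.
- by move=> e; rewrite e blockS_in in nB.
Qed.

Lemma code_cycleE : code_cycle c =1 code_succ c.
Proof.
move=> B; rewrite -pvalE /code_cycle val_insubd.
by rewrite (introT (injectiveP _)) ?ffunE // => B1 B2; rewrite !ffunE => /code_succ_inj.
Qed.

Lemma iter_code_cycle i m : i < nblocks c ->
  iter m (code_cycle c) (block c i) = block c ((i + m) %% nblocks c).
Proof.
move=> i_lt; elim: m => [|m IHm]; first by rewrite addn0 modn_small.
rewrite iterS IHm code_cycleE code_succ_block ?ltn_mod //.
by rewrite -addn1 modnDml addn1 addnS.
Qed.

Lemma code_partitionP : cyc_ord_partition (code_partition c).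
Proof.
rewrite /cyc_ord_partition code_blocks_partition /cyclic_order_on /=.
apply/andP; split.
  by apply/forallP => B; apply/implyP => nB; rewrite code_cycleE code_succ_id.
apply/forall_inP => _ /code_blocksP[i i_lt ->]; apply/forall_inP => _ /code_blocksP[j j_lt ->].
have -> : block c j = iter (j + (nblocks c - i)) (code_cycle c) (block c i).
  by rewrite iter_code_cycle // addnCA subnKC 1?ltnW // modnDr modn_small.
exact: fconnect_iter.
Qed.

End Codes.

Section PartitionCode.
Variables (r : nat) (x0 : 'I_r).

Definition code_of_partition (p : {set {set 'I_r}} * {perm {set 'I_r}}) :
    {ffun 'I_r -> nat} :=
  [ffun x => findex p.2 (pblock p.1 x0) (pblock p.1 x)].

Variables (P : {set {set 'I_r}}) (s : {perm {set 'I_r}}).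
Hypotheses (partP : partition P [set: 'I_r]) (cyc_s : cyclic_order_on P s).
Let B0 := pblock P x0.
Let c := code_of_partition (P, s).

Lemma fconnect_pblock B : fconnect s B0 B = (B \in P).
Proof.
case/andP: cyc_s => /forallP s_fix /forall_inP s_conn.
apply/idP/idP => [|PB]; last by apply/(forall_inP (s_conn _ (pblock_in partP x0))).
have s_stable B' : B' \in P -> s B' \in P.
  move=> PB'; apply: contraT => nPsB'.
  have /eqP/perm_inj sB'_eq := implyP (s_fix (s B')) nPsB'.
  by move: nPsB'; rewrite sB'_eq PB'.
move/iter_findex <-; elim: (findex _ _ _) => [|n IHn] /=; first exact: (pblock_in partP).
exact: s_stable.
Qed.

Lemma order_pblock : fingraph.order s B0 = #|P|.
Proof. by apply: eq_card => B; rewrite inE fconnect_pblock. Qed.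

Lemma block_code_of_partition j : j < #|P| -> block c j = iter j s B0.
Proof.
move=> j_lt; apply/setP => x; rewrite !inE ffunE /= (mem_block_pblock partP).
  by apply/eqP/eqP => [<-|->]; rewrite ?iter_findex ?fconnect_pblock ?(pblock_in partP) //
    findex_iter ?order_pblock.
by rewrite -fconnect_pblock fconnect_iter.
Qed.

Lemma code_of_partition_lt x : c x < #|P|.
Proof. by rewrite ffunE -order_pblock findex_max // fconnect_pblock (pblock_in partP). Qed.

Lemma code_of_partition_nblocks : is_code x0 c /\ nblocks c = #|P|.
Proof.
apply: is_code_nblocks; first by rewrite ffunE findex0.
  exact: code_of_partition_lt.
move=> j j_lt; have [x] : exists x, x \in iter j s B0.
  by apply: (partition_block_nonempty partP); rewrite -fconnect_pblock fconnect_iter.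
by rewrite -block_code_of_partition // inE => /eqP; exists x.
Qed.

Lemma code_blocks_of_partition : code_blocks c = P.
Proof.
have [_ nb_c] := code_of_partition_nblocks.
apply/setP => B; apply/idP/idP => [/code_blocksP[j]|PB].
  rewrite nb_c => j_lt ->.
  by rewrite block_code_of_partition // -fconnect_pblock fconnect_iter.
have B_iter : fconnect s B0 B by rewrite fconnect_pblock.
have j_lt : findex s B0 B < #|P| by rewrite -order_pblock findex_max.
rewrite -(iter_findex B_iter) -block_code_of_partition //.
by apply: block_in_code_blocks; rewrite nb_c.
Qed.

Lemma code_cycle_of_partition : code_cycle c = s.
Proof.
have [code_c nb_c] := code_of_partition_nblocks.
apply/permP => B; rewrite (code_cycleE code_c).
have [PB|nPB] := boolP (B \in P); last first.
  rewrite code_succ_id ?code_blocks_of_partition //.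
  by case/andP: cyc_s => /forallP/(_ B); rewrite nPB => /eqP.
have B_iter : fconnect s B0 B by rewrite fconnect_pblock.
have j_lt : findex s B0 B < #|P| by rewrite -order_pblock findex_max.
rewrite -(iter_findex B_iter) -block_code_of_partition // (code_succ_block code_c) ?nb_c //.
rewrite !block_code_of_partition ?ltn_mod ?(leq_ltn_trans _ j_lt) // -iterS.
have [Sj_lt|Sj_ge] := ltnP (findex s B0 B).+1 #|P|; first by rewrite modn_small.
have -> : (findex s B0 B).+1 = #|P| by apply/eqP; rewrite eqn_leq j_lt Sj_ge.
by rewrite modnn -order_pblock (iter_order (@perm_inj _ s)).
Qed.

Lemma code_of_partitionK : code_partition c = (P, s).
Proof. by rewrite /code_partition code_blocks_of_partition code_cycle_of_partition. Qed.

End PartitionCode.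

Lemma code_partitionK r (x0 : 'I_r) c :
  is_code x0 c -> code_of_partition x0 (code_partition c) = c.
Proof.
move=> code_c; have /andP[part_c cyc_c] := code_partitionP code_c.
have [c0 _] := code_c.
apply/ffunP => x; rewrite ffunE /= !(pblock_code_blocks code_c) c0.
have <- : iter (c x) (code_cycle c) (block c 0) = block c (c x).
  by rewrite (iter_code_cycle code_c) ?modn_small ?code_lt_nblocks.
rewrite findex_iter //.
have -> : block c 0 = pblock (code_blocks c) x0 by rewrite (pblock_code_blocks code_c) c0.
by rewrite (order_pblock x0 part_c cyc_c) (card_code_blocks code_c) code_lt_nblocks.
Qed.

Lemma find_iota0 (a : pred nat) n i :
  i < n -> a i -> (forall j, j < i -> ~~ a j) -> find a (iota 0 n) = i.
Proof.
move=> i_lt ai before_i.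
have has_a : has a (iota 0 n) by apply/hasP; exists i; rewrite ?mem_iota.
have := has_a; rewrite has_find size_iota => find_lt.
have := nth_find 0 has_a; rewrite nth_iota // add0n => a_find.
case: (ltngtP (find a (iota 0 n)) i) => [/before_i|lt_i|//]; first by rewrite a_find.
by have := before_find 0 lt_i; rewrite nth_iota ?ai // (ltn_trans i_lt).
Qed.

Section Flip.
Variables (r : nat) (J : {set 'I_r}).
Implicit Types (c : {ffun 'I_r -> nat}).

Definition inside c j := block c j \subset J.
Definition outside c j := [disjoint block c j & J].
Definition straddles c j := ~~ inside c j && ~~ outside c j.
Definition flippable c j :=
  straddles c j || [&& inside c j, outside c j.+1 & j.+1 < nblocks c].
Definition pivot c := find (flippable c) (iota 0 (nblocks c)).
Definition split_at c i : {ffun 'I_r -> nat} := [ffun x =>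
  if c x < i then c x else if c x == i then (if x \in J then i else i.+1) else (c x).+1].
Definition merge_at c i : {ffun 'I_r -> nat} :=
  [ffun x => if c x <= i then c x else (c x).-1].
Definition flip c :=
  if straddles c (pivot c) then split_at c (pivot c) else merge_at c (pivot c).

Lemma not_outside c j x : x \in block c j -> x \in J -> ~~ outside c j.
Proof. by move=> xj xJ; apply/negP => /disjointFr/(_ xj); rewrite xJ. Qed.

Lemma not_inside c j x : x \in block c j -> x \notin J -> ~~ inside c j.
Proof. by move=> xj nxJ; apply/negP => /subsetP/(_ x xj); apply/negP. Qed.

Lemma flippable_eq c c' j :
    block c' j = block c j -> block c' j.+1 = block c j.+1 ->
    j.+1 < nblocks c -> j.+1 < nblocks c' ->
  flippable c' j = flippable c j.
Proof.
move=> ej eSj Sj_lt Sj_lt'.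
by rewrite /flippable /straddles /inside /outside ej eSj Sj_lt Sj_lt'.
Qed.

Lemma pivot_eq c c' i :
    i < nblocks c -> i < nblocks c' -> flippable c' i ->
    (forall j, j < i -> block c' j = block c j) ->
    (exists2 x, x \in block c' i & x \in J) ->
    (forall j, j < i -> ~~ flippable c j) ->
  pivot c' = i.
Proof.
move=> i_lt i_lt' flip_i prefix [x xi xJ] before_i; apply: find_iota0 => // j j_lt.
case: (ltngtP j.+1 i) => [Sj_lt|Sj_gt|Sj_eq].
- by rewrite (flippable_eq (prefix _ j_lt) (prefix _ Sj_lt)) ?before_i
    ?(ltn_trans Sj_lt).
- by rewrite ltnS leqNgt j_lt in Sj_gt.
have := before_i _ j_lt; rewrite /flippable Sj_eq (negbTE (not_outside xi xJ)).
by rewrite andFb andbF orbF /straddles /inside /outside prefix // => /norP[].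
Qed.

Lemma straddlesP c j : reflect
  ((exists2 y, y \in block c j & y \in J) /\ (exists2 z, z \in block c j & z \notin J))
  (straddles c j).
Proof.
apply: (iffP andP) => [[/subsetPn[z zj nzJ]]|[[y yj yJ] [z zj nzJ]]].
  rewrite /outside -setI_eq0 => /set0Pn[y]; rewrite inE => /andP[yj yJ].
  by split; [exists y | exists z].
by rewrite (not_inside zj nzJ) (not_outside yj yJ).
Qed.

Section SplitAt.
Variables (x0 : 'I_r) (c : {ffun 'I_r -> nat}) (i : nat).
Let c' := split_at c i.

Lemma split_at_code : x0 \in J -> is_code x0 c -> i < nblocks c -> straddles c i ->
  is_code x0 c' /\ nblocks c' = (nblocks c).+1.
Proof.
move=> x0J [c0 c_onto] i_lt straddles_i.
have [[y yi yJ] [z zi nzJ]] := straddlesP _ _ straddles_i.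
move: yi zi; rewrite !inE => /eqP yi /eqP zi.
apply: is_code_nblocks.
- by rewrite ffunE c0; case: i => //=; rewrite x0J.
- move=> x; rewrite ffunE; have := code_lt_nblocks c x.
  by case: (ltngtP (c x) i) => ?; case: (x \in J); lia.
- move=> j j_lt; case: (ltngtP j i) => [j_lt_i|i_lt_j|->]; last first.
  + by exists y; rewrite ffunE yi ltnn eqxx yJ.
  + have [->|Sj_neq] := eqVneq j i.+1.
      by exists z; rewrite ffunE zi ltnn eqxx (negbTE nzJ).
    have [x cx] : exists x, c x = j.-1 by apply: c_onto; lia.
    by exists x; rewrite ffunE cx; do !case: ifP; lia.
  + have [x cx] := c_onto j (ltn_trans j_lt_i i_lt).
    by exists x; rewrite ffunE cx j_lt_i.
Qed.

Lemma block_split_at_lt j : j < i -> block c' j = block c j.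
Proof.
move=> j_lt; apply/setP => x; rewrite !inE ffunE.
case: (ltngtP (c x) i) => //= ?; rewrite ?andbF ?andbT;
  try case: (x \in J); rewrite /= ?andbF ?andbT; apply/eqP/eqP; lia.
Qed.

Lemma block_split_at_eq : block c' i = block c i :&: J.
Proof.
apply/setP => x; rewrite !inE ffunE.
case: (ltngtP (c x) i) => //= ?; rewrite ?andbF ?andbT;
  try case: (x \in J); rewrite /= ?andbF ?andbT; apply/eqP/eqP; lia.
Qed.

Lemma block_split_at_succ : block c' i.+1 = block c i :\: J.
Proof.
apply/setP => x; rewrite !inE ffunE.
case: (ltngtP (c x) i) => //= ?; rewrite ?andbF ?andbT;
  try case: (x \in J); rewrite /= ?andbF ?andbT; apply/eqP/eqP; lia.
Qed.

Lemma block_split_at_gt j : i < j -> block c' j.+1 = block c j.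
Proof.
move=> i_lt_j; apply/setP => x; rewrite !inE ffunE.
case: (ltngtP (c x) i) => //= ?; rewrite ?andbF ?andbT;
  try case: (x \in J); rewrite /= ?andbF ?andbT; apply/eqP/eqP; lia.
Qed.

Lemma merge_at_splitK : merge_at c' i = c.
Proof.
apply/ffunP => x; rewrite !ffunE; move: (c x) => n.
by case: (ltngtP n i) => ?; try case: (x \in J); repeat (case: ifP => ?); lia.
Qed.

Lemma pivot_split_at : x0 \in J -> is_code x0 c -> i < nblocks c -> straddles c i ->
  (forall j, j < i -> ~~ flippable c j) -> pivot c' = i /\ ~~ straddles c' i.
Proof.
move=> x0J code_c i_lt straddles_i before_i.
have [[y yi yJ] _] := straddlesP _ _ straddles_i.
have inside_i : inside c' i by rewrite /inside block_split_at_eq subsetIr.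
split; last by rewrite /straddles inside_i.
have [_ nb_c'] := split_at_code x0J code_c i_lt straddles_i.
apply: (pivot_eq (c := c)) => //.
- by rewrite nb_c' ltnS ltnW.
- rewrite /flippable inside_i /outside block_split_at_succ nb_c' ltnS i_lt andbT orbC /=.
  by apply/orP; left; apply/setDidPl; rewrite setDDl setUid.
- exact: block_split_at_lt.
- by exists y; rewrite // block_split_at_eq inE yi.
Qed.

End SplitAt.

Section MergeAt.
Variables (x0 : 'I_r) (c : {ffun 'I_r -> nat}) (i : nat).
Let c' := merge_at c i.

Lemma merge_at_code : is_code x0 c -> i.+1 < nblocks c ->
  is_code x0 c' /\ nblocks c' = (nblocks c).-1.
Proof.
move=> [c0 c_onto] Si_lt.
apply: is_code_nblocks; first by rewrite ffunE c0.
  by move=> x; rewrite ffunE; have := code_lt_nblocks c x; case: ifP; lia.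
move=> j j_lt; case: (leqP j i) => [j_le|i_lt_j].
  have [x cx] : exists x, c x = j by apply: c_onto; lia.
  by exists x; rewrite ffunE cx j_le.
have [x cx] : exists x, c x = j.+1 by apply: c_onto; lia.
by exists x; rewrite ffunE cx; case: ifP; lia.
Qed.

Lemma block_merge_at_lt j : j < i -> block c' j = block c j.
Proof.
by move=> j_lt; apply/setP => x; rewrite !inE ffunE; case: ifP => ?; apply/eqP/eqP; lia.
Qed.

Lemma block_merge_at_eq : block c' i = block c i :|: block c i.+1.
Proof.
apply/setP => x; rewrite !inE ffunE.
case: ifP => ?; apply/eqP/orP; case: (ltngtP (c x) i) => ?; try lia;
  try (by left; apply/eqP); try (by right; apply/eqP; lia);
  move=> [/eqP|/eqP]; lia.
Qed.

Lemma split_at_mergeK : inside c i -> outside c i.+1 -> split_at c' i = c.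
Proof.
move=> inside_i outside_Si; apply/ffunP => x; rewrite !ffunE.
have x_inside : c x = i -> x \in J.
  by move=> cx; apply: (subsetP inside_i); rewrite inE cx.
have x_outside : c x = i.+1 -> x \notin J.
  by move=> cx; rewrite (disjointFr outside_Si) // inE cx.
move: (c x) x_inside x_outside => n.
by case: (x \in J) => /= x_in x_out; case: (leqP n i) => ?; do !case: ifP; lia.
Qed.

Lemma pivot_merge_at : is_code x0 c -> i.+1 < nblocks c -> inside c i -> outside c i.+1 ->
  (forall j, j < i -> ~~ flippable c j) -> pivot c' = i /\ straddles c' i.
Proof.
move=> code_c Si_lt inside_i outside_Si before_i.
have [y yi] := block_nonempty code_c (ltnW Si_lt).
have [z zSi] := block_nonempty code_c Si_lt.
have yJ : y \in J := subsetP inside_i y yi.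
have nzJ : z \notin J by rewrite (disjointFr outside_Si zSi).
have yi' : y \in block c' i by rewrite block_merge_at_eq inE yi.
have straddles_i : straddles c' i.
  by apply/straddlesP; split; [exists y | exists z]; rewrite // block_merge_at_eq inE zSi orbT.
split => //; have [_ nb_c'] := merge_at_code code_c Si_lt.
apply: (pivot_eq (c := c)) => //.
- exact: ltnW.
- by rewrite nb_c' -ltnS (ltn_predK Si_lt).
- by rewrite /flippable straddles_i.
- exact: block_merge_at_lt.
- by exists y.
Qed.

End MergeAt.

Section Pivot.
Variable x0 : 'I_r.
Hypotheses (x0J : x0 \in J) (J_neqT : J != [set: 'I_r]).

Lemma flippable_exists c : is_code x0 c -> has (flippable c) (iota 0 (nblocks c)).
Proof.
move=> [c0 _]; apply/negPn/negP => /hasPn none_flippable.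
have not_flippable j : j < nblocks c -> ~~ flippable c j.
  by move=> j_lt; apply: none_flippable; rewrite mem_iota.
have inside_of_not_outside j : j < nblocks c -> ~~ outside c j -> inside c j.
  move/not_flippable; rewrite negb_or /straddles negb_and !negbK.
  by case/andP => /orP[]->.
have all_inside j : j < nblocks c -> inside c j.
  elim: j => [|j IHj] Sj_lt; apply: inside_of_not_outside => //.
    by apply: (not_outside (x := x0)); rewrite ?inE ?c0.
  have := not_flippable j (ltnW Sj_lt).
  by rewrite /flippable IHj ?(ltnW Sj_lt) // Sj_lt andbT negb_or => /andP[].
move/negP: J_neqT; apply; rewrite eqEsubset subsetT; apply/subsetP => x _.
by apply: (subsetP (all_inside _ (code_lt_nblocks c x))); rewrite inE.
Qed.

Lemma pivot_spec c : is_code x0 c -> [/\ pivot c < nblocks c,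
  flippable c (pivot c) & forall j, j < pivot c -> ~~ flippable c j].
Proof.
move=> /flippable_exists has_flippable.
have := has_flippable; rewrite has_find size_iota => pivot_lt.
split => // [|j j_lt].
  by have := nth_find 0 has_flippable; rewrite nth_iota.
have := before_find 0 j_lt; rewrite nth_iota ?add0n => [->//|].
exact: ltn_trans j_lt pivot_lt.
Qed.

Lemma flipP c : is_code x0 c -> is_code x0 (flip c) /\ flip (flip c) = c.
Proof.
move=> code_c; have [pivot_lt flippable_pivot before_pivot] := pivot_spec code_c.
rewrite /flip; case: ifPn => [straddles_pivot|not_straddles].
  have [code_c' _] := split_at_code x0J code_c pivot_lt straddles_pivot.
  have [-> /negbTE->] := pivot_split_at x0J code_c pivot_lt straddles_pivot before_pivot.
  by rewrite merge_at_splitK.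
move: flippable_pivot; rewrite /flippable (negbTE not_straddles).
case/and3P=> inside_p outside_Sp Sp_lt.
have [code_c' _] := merge_at_code code_c Sp_lt.
have [-> ->] := pivot_merge_at code_c Sp_lt inside_p outside_Sp before_pivot.
by rewrite split_at_mergeK.
Qed.

End Pivot.
End Flip.

Import GRing.Theory Num.Theory.
Local Open Scope ring_scope.

Lemma sum_sign_reversing_involution (R : numDomainType) (T : finType) (P : pred T)
    (F : T -> R) (g : T -> T) :
    (forall x, P x -> [/\ P (g x), g (g x) = x & F (g x) = - F x]) ->
  \sum_(x | P x) F x = 0.
Proof.
move=> g_inv.
have sum_g : \sum_(x | P x) F x = \sum_(x | P x) F (g x).
  rewrite (reindex_onto g g) => [|x /g_inv[] //]; apply: eq_bigl => x.
  apply/andP/idP => [[Pgx /eqP <-]|Px]; first by have [] := g_inv _ Pgx.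
  by have [-> -> _] := g_inv _ Px.
have /eqP : (\sum_(x | P x) F x) *+ 2 = 0.
  rewrite mulr2n {1}sum_g -big_split big1 // => x /g_inv[_ _ ->]; exact: addNr.
by rewrite mulrn_eq0 /= => /eqP.
Qed.

Definition cum_summand (R : numDomainType) (r : nat) (phi : {set 'I_r} -> R)
    (p : {set {set 'I_r}} * {perm {set 'I_r}}) : R :=
  (-1) ^+ (#|p.1|.-1) * \prod_(I in p.1) phi I.

Section CodeTerm.
Variables (R : numDomainType) (r : nat) (phi : {set 'I_r} -> R).

Definition code_term (c : {ffun 'I_r -> nat}) : R :=
  (-1) ^+ (nblocks c).-1 * \prod_(j < nblocks c) phi (block c j).

Lemma cum_summand_code_partition x0 c :
  is_code x0 c -> cum_summand phi (code_partition c) = code_term c.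
Proof.
move=> code_c; rewrite /cum_summand /code_term /= (card_code_blocks code_c).
rewrite big_imset => [|i j _ _ /(block_inj code_c (ltn_ord i))/val_inj //].
by congr (_ * _); apply: eq_bigl => j; rewrite inE.
Qed.

Variables (J : {set 'I_r}) (x0 : 'I_r).
Hypotheses (x0J : x0 \in J) (J_neqT : J != [set: 'I_r]).
Hypothesis phi_split : forall B, phi (B :&: J) * phi (B :\: J) = phi B.

Lemma code_term_split_at c i : is_code x0 c -> (i < nblocks c)%N -> straddles J c i ->
  code_term (split_at J c i) = - code_term c.
Proof.
move=> code_c i_lt straddles_i; set c' := split_at J c i.
have [_ nb_c'] := split_at_code x0J code_c i_lt straddles_i.
rewrite /code_term nb_c' /= exprS mulN1r -mulNr; congr (_ * _).
rewrite -(big_mkord xpredT (fun j => phi (block c' j))).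
rewrite -(big_mkord xpredT (fun j => phi (block c j))).
rewrite (big_cat_nat (n := i)) //=; last by rewrite ltnW // ltnS ltnW.
rewrite [in RHS](big_cat_nat (n := i)) //=; last by rewrite ltnW.
congr (_ * _).
  by apply: eq_big_nat => j /andP[_ j_lt]; rewrite block_split_at_lt.
rewrite big_ltn; last by rewrite ltnS ltnW.
rewrite big_ltn; last by rewrite ltnS.
rewrite [in RHS]big_ltn // mulrA block_split_at_eq block_split_at_succ phi_split.
congr (_ * _); rewrite big_add1 /=; apply: eq_big_nat => j /andP[i_lt_j _].
by rewrite block_split_at_gt.
Qed.

Lemma code_term_flip c : is_code x0 c -> code_term (flip J c) = - code_term c.
Proof.
move=> code_c; have [pivot_lt flippable_pivot before_pivot] := pivot_spec x0J J_neqT code_c.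
rewrite /flip; case: ifPn => [straddles_p|not_straddles]; first exact: code_term_split_at.
move: flippable_pivot; rewrite /flippable (negbTE not_straddles).
case/and3P=> inside_p outside_Sp Sp_lt.
have [code_m nb_m] := merge_at_code code_c Sp_lt.
have [_ straddles_m] := pivot_merge_at code_c Sp_lt inside_p outside_Sp before_pivot.
rewrite -[in RHS](split_at_mergeK inside_p outside_Sp).
by rewrite code_term_split_at ?opprK // nb_m -ltnS (ltn_predK Sp_lt).
Qed.

End CodeTerm.

Lemma cum_eq0_of_split (R : numDomainType) (r : nat) (J : {set 'I_r})
    (phi : {set 'I_r} -> R) :
    J != set0 -> J != [set: 'I_r] ->
    (forall B, phi (B :&: J) * phi (B :\: J) = phi B) ->
  cum phi = 0.
Proof.
case/set0Pn => x0 x0J J_neqT phi_split.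
apply: (@sum_sign_reversing_involution _ _ _ (cum_summand phi)
  (fun p => code_partition (flip J (code_of_partition x0 p)))) => -[P s] /andP[partP cyc_s].
have [code_c _] := code_of_partition_nblocks x0 partP cyc_s.
have [code_f flipK] := flipP x0J J_neqT code_c.
split; first exact: code_partitionP code_f.
  by rewrite code_partitionK // flipK code_of_partitionK.
rewrite (cum_summand_code_partition _ code_f) (code_term_flip x0J J_neqT phi_split code_c).
by rewrite -(cum_summand_code_partition _ code_c) code_of_partitionK.
Qed.

Lemma psiQ_setID (R : numDomainType) (r : nat) (Q : {set {set 'I_r}})
    (psi : {set 'I_r} -> R) (J B : {set 'I_r}) :
    trivIset Q -> J \in Q -> psi set0 = 1 ->
  psiQ Q psi (B :&: J) * psiQ Q psi (B :\: J) = psiQ Q psi B.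
Proof.
move=> tIQ QJ psi0; rewrite /psiQ -big_split; apply: eq_bigr => K QK /=.
have [->|neqKJ] := eqVneq K J.
  have -> : (B :\: J) :&: J = set0.
    by apply/setP => x; rewrite !inE; case: (x \in J); rewrite ?andbF.
  by rewrite -setIA setIid psi0 mulr1.
have disjKJ : [disjoint K & J] by move/trivIsetP: tIQ; apply.
rewrite -setIA (setIC J) (disjoint_setI0 disjKJ) setI0 psi0 mul1r.
congr psi; apply/setP => x; rewrite !inE.
by case xK: (x \in K); rewrite ?(disjointFr disjKJ xK) ?andbF.
Qed.

Theorem proposition8p1 (R : realFieldType) (r : nat) (hr : (3 <= r)%N)
    (Q : {set {set 'I_r}}) (hQ : partition Q [set: 'I_r]) (hQ2 : (2 <= #|Q|)%N)
    (psi : {set 'I_r} -> R) (hpsi : psi set0 = 1) :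
  cum (psiQ Q psi) = 0.
Proof.
pose x0 : 'I_r := Ordinal (ltn_trans (isT : 0 < 2)%N hr).
apply: (@cum_eq0_of_split _ _ (pblock Q x0)).
- by apply/set0Pn; exists x0; rewrite mem_pblock (cover_partition hQ) inE.
- exact: pblock_neqT.
- by move=> B; apply: psiQ_setID; rewrite ?pblock_in //; case/and3P: hQ.
Qed.
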